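(* Let $b,c,d$ be positive integers with $c/d\le b$, let $C$ be a non-empty set and $\|\cdot\|:\mathcal P(C)\setminus\{\emptyset\}\to\mathbb R_{\ge0}$. If $(C,\|\cdot\|)$ is $b$-big, then $(C,\|\cdot\|)$ is $(c,d)$-big.
   Context: $(C,\|\cdot\|)$ is $b$-big if for every non-empty $X\subseteq C$ and every colouring $\chi:X\to b$ there is a non-empty $Y\subseteq X$ on which $\chi$ is constant and $\|Y\|\ge\|X\|-1$. $(C,\|\cdot\|)$ is $(c,d)$-big if for every non-empty $X\subseteq C$ and every colouring $\chi:X\to c$ there is a non-empty $Y\subseteq X$ with $|\mathrm{ran}(\chi\restriction Y)|\le d$ and $\|Y\|\ge\|X\|-1$. *)

From Stdlib Require Import Reals List.
Open Scope R_scope.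

(* Subsets of C are predicates C -> Prop. The norm ||.|| is a function on
   subsets; only its values on non-empty subsets are ever used. *)
Definition nonemptyS {C : Type} (X : C -> Prop) : Prop := exists x, X x.
Definition subsetS {C : Type} (Y X : C -> Prop) : Prop := forall x, Y x -> X x.

(* chi : X -> k, represented as chi : C -> nat with values < k on X
   (values outside X are irrelevant). k = {0,...,k-1}. *)
Definition colouring {C : Type} (X : C -> Prop) (k : nat) (chi : C -> nat) : Prop :=
  forall x, X x -> (chi x < k)%nat.

Definition b_big {C : Type} (nrm : (C -> Prop) -> R) (b : nat) : Prop :=
  forall X : C -> Prop, nonemptyS X ->
  forall chi : C -> nat, colouring X b chi ->
  exists Y : C -> Prop, nonemptyS Y /\ subsetS Y X /\
    (exists i : nat, forall y, Y y -> chi y = i) /\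
    nrm Y >= nrm X - 1.

(* |ran(chi|Y)| <= d : the range of chi on Y is contained in a list of
   length <= d. *)
Definition range_card_le {C : Type} (chi : C -> nat) (Y : C -> Prop) (d : nat) : Prop :=
  exists s : list nat, (length s <= d)%nat /\ forall y, Y y -> In (chi y) s.

Definition cd_big {C : Type} (nrm : (C -> Prop) -> R) (c d : nat) : Prop :=
  forall X : C -> Prop, nonemptyS X ->
  forall chi : C -> nat, colouring X c chi ->
  exists Y : C -> Prop, nonemptyS Y /\ subsetS Y X /\
    range_card_le chi Y d /\
    nrm Y >= nrm X - 1.

(* Group the c colours into blocks of d consecutive ones: since c <= b d, the
   block index x |-> chi x / d is a b-colouring, and a set on which the block
   index is constant sees at most the d colours of a single block. *)
From Stdlib Require Import Reals List Lia Lra Arith.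
Open Scope R_scope.

Lemma le_mul_of_INR_div_le (b c d : nat) :
  (0 < d)%nat -> INR c / INR d <= INR b -> (c <= b * d)%nat.
Proof.
  intros hd hcd.
  assert (Hd : 0 < INR d) by (apply lt_0_INR; exact hd).
  apply INR_le; rewrite mult_INR.
  replace (INR c) with (INR c / INR d * INR d) by (field; lra).
  apply Rmult_le_compat_r; lra.
Qed.

Lemma colouring_div {C : Type} (X : C -> Prop) (b c d : nat) (chi : C -> nat) :
  (c <= b * d)%nat -> colouring X c chi ->
  colouring X b (fun x => (chi x / d)%nat).
Proof.
  intros hle hchi x hx.
  specialize (hchi x hx).
  apply Nat.Div0.div_lt_upper_bound; lia.
Qed.

Lemma range_card_le_of_div_const {C : Type} (chi : C -> nat) (Y : C -> Prop) (d i : nat) :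
  (0 < d)%nat -> (forall y, Y y -> (chi y / d)%nat = i) -> range_card_le chi Y d.
Proof.
  intros hd hi.
  exists (seq (i * d) d); split.
  - rewrite length_seq; lia.
  - intros y hy; apply in_seq.
    pose proof (Nat.div_mod (chi y) d ltac:(lia)) as hdiv.
    pose proof (Nat.mod_upper_bound (chi y) d ltac:(lia)).
    rewrite (hi y hy) in hdiv; lia.
Qed.

Theorem lemma5p3 (b c d : nat) (C : Type) (nrm : (C -> Prop) -> R)
  (hb : (0 < b)%nat) (hc : (0 < c)%nat) (hd : (0 < d)%nat)
  (hcd : INR c / INR d <= INR b)
  (hC : inhabited C)
  (hnrm : forall X : C -> Prop, nonemptyS X -> 0 <= nrm X) :
  b_big nrm b -> cd_big nrm c d.
Proof.
  intros hbig X hX chi hchi.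
  pose proof (le_mul_of_INR_div_le b c d hd hcd) as hle.
  destruct (hbig X hX _ (colouring_div X b c d chi hle hchi))
    as [Y [hY [hYX [[i hi] hnrmY]]]].
  exists Y; repeat split; try assumption.
  exact (range_card_le_of_div_const chi Y d i hd hi).
Qed.
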